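(* Let $S=(d,N_1,\dots,N_L)$ be a neural network architecture, let $C>0$, let $\Omega\subset\mathbb{R}^d$ be Borel measurable and bounded, and let $\varrho(x)=\max\{0,x\}$ be the ReLU. Then the set $\mathcal{RNN}_\varrho^{\Omega,C}(S)=\{\mathrm{R}_\varrho^\Omega(\Phi):\Phi\in\mathcal{NN}(S),\ \|\Phi\|_{\mathrm{scaling}}\le C\}$ is closed in $L^p(\mu;\mathbb{R}^{N_L})$ for every $p\in[1,\infty]$ and every finite Borel measure $\mu$ on $\Omega$. If $\Omega$ is compact, then $\mathcal{RNN}_\varrho^{\Omega,C}(S)$ is also closed in $C(\Omega;\mathbb{R}^{N_L})$.
   Context: A neural network with architecture $S=(N_0,\dots,N_L)$ ($N_0=d$) is a family $\Phi=((A_\ell,b_\ell))_{\ell=1}^L$, $A_\ell\in\mathbb{R}^{N_\ell\times N_{\ell-1}}$, $b_\ell\in\mathbb{R}^{N_\ell}$; $\mathcal{NN}(S)$ is the set of these; $\|\Phi\|_{\mathrm{scaling}}=\max_\ell\|A_\ell\|_{\max}$, where $\|\cdot\|_{\max}$ is the maximal absolute entry (no bound is imposed on the biases $b_\ell$). $\mathrm{R}_\varrho^\Omega(\Phi):\Omega\to\mathbb{R}^{N_L}$, $x\mapsto x_L$, where $x_0=x$, $x_\ell=\varrho(A_\ell x_{\ell-1}+b_\ell)$ for $1\le\ell\le L-1$ (componentwise), $x_L=A_Lx_{L-1}+b_L$. The norms are $\|f\|_{L^p(\mu;\mathbb{R}^{N_L})}=\|\,|f|\,\|_{L^p(\mu)}$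 and $\|f\|_{\sup}=\sup_x|f(x)|$ with $|\cdot|$ the Euclidean norm. *)

From HB Require Import structures.
From mathcomp Require Import all_boot all_order all_algebra.
From mathcomp Require Import all_classical all_reals all_analysis.
Set Implicit Arguments. Unset Strict Implicit. Unset Printing Implicit Defensive.
Import Order.TTheory GRing.Theory Num.Theory.
Import numFieldNormedType.Exports.
Local Open Scope ring_scope.
Local Open Scope classical_set_scope.

Definition borelRV (R : realType) (n : nat) :=
  g_sigma_algebraType (@open ('rV[R]_n)).

Definition eucl (R : realType) (n : nat) (v : 'rV[R]_n) : R :=
  Num.sqrt (\sum_(i < n) v ord0 i ^+ 2).

Definition relu (R : realType) (x : R) : R := Num.max 0 x.

(* An architecture S = (d, N_1, ..., N_L) is given by d and Ns = [N_1;...;N_L],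
   with L = size Ns >= 1.  width d Ns l = N_l. *)
Definition width (d : nat) (Ns : seq nat) (l : nat) : nat := nth 0%N (d :: Ns) l.

(* A network of architecture S: layer l (1 <= l <= L) has weight matrix
   A_l = (wA l i j)_{i < N_l, j < N_{l-1}} and bias b_l = (wb l i)_{i < N_l};
   entries outside these ranges (and layers outside 1..L) are never used. *)
Record network (R : realType) := Network {
  wA : nat -> nat -> nat -> R;
  wb : nat -> nat -> R }.

Definition scaling_norm (R : realType) (d : nat) (Ns : seq nat) (Phi : network R) : R :=
  \big[Num.max/0]_(l < size Ns)
    \big[Num.max/0]_(i < width d Ns l.+1)
      \big[Num.max/0]_(j < width d Ns l) `|wA Phi l.+1 i j|.

Fixpoint hidden (R : realType) (d : nat) (Ns : seq nat) (Phi : network R)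
    (x : 'rV[R]_d) (l : nat) : 'I_(width d Ns l) -> R :=
  match l as l0 return 'I_(width d Ns l0) -> R with
  | 0 => fun j => x ord0 j
  | l'.+1 => fun i => relu (\sum_(j < width d Ns l') wA Phi l'.+1 i j * @hidden R d Ns Phi x l' j
                            + wb Phi l'.+1 i)
  end.

Definition outdim (d : nat) (Ns : seq nat) : nat := width d Ns (size Ns).

Definition realize (R : realType) (d : nat) (Ns : seq nat) (Phi : network R)
    (x : 'rV[R]_d) : 'rV[R]_(outdim d Ns) :=
  \row_(i < outdim d Ns)
    (\sum_(j < width d Ns (size Ns).-1)
        wA Phi (size Ns) i j * @hidden R d Ns Phi x (size Ns).-1 j + wb Phi (size Ns) i).

From HB Require Import structures.
From mathcomp Require Import all_boot all_order all_algebra.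
From mathcomp Require Import all_classical all_reals all_analysis.
From mathcomp Require Import ring lra measurable_realfun ess_sup_inf.
Import Order.TTheory GRing.Theory Num.Theory.
Import numFieldNormedType.Exports.
Local Open Scope ring_scope.
Local Open Scope classical_set_scope.
Set Implicit Arguments. Unset Strict Implicit. Unset Printing Implicit Defensive.

(* Fix an ultrafilter U on nat finer than the Frechet filter. Along U every real
   sequence converges in the extended reals, so the weights, bounded by C,
   converge to weights of norm at most C. The biases are handled layer by layer:
   a neuron whose effective bias converges has a uniform limit on the bounded set
   Omega; one whose bias tends to -oo is eventually 0 on Omega; one whose bias
   tends to +oo is eventually active on Omega, hence an affine function plus a
   diverging constant, which is carried along as a shift ([tracks]) and absorbed
   into the biases of the next layer. At the output layer either every coordinate
   converges uniformly on Omega to the realization of a network of scaling norm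
   at most C, which must then agree with the limit f (a.e., resp. on Omega), or
   some coordinate tends to infinity uniformly on Omega, which forces Omega to be
   null (resp. empty). *)

Section UniformConvergence.
Variables (R : realType) (I T : Type) (U : set_system I) (D : set T).
Context {FU : Filter U}.

Definition unif_cvg (F : I -> T -> R) (g : T -> R) :=
  forall e, 0 < e -> \forall n \near U, forall x, D x -> `|F n x - g x| <= e.

Lemma eq_unif_cvg F g F' g' : unif_cvg F g -> F =2 F' -> g =1 g' ->
  unif_cvg F' g'.
Proof.
move=> Fg eF eg e /Fg; apply: filterS => n hn x Dx.
by rewrite -eF -eg; exact: hn.
Qed.

Lemma unif_cvg_cst (a : I -> R) (a0 : R) :
  a @ U --> a0 -> unif_cvg (fun n _ => a n) (fun _ => a0).
Proof.
by move=> /cvgrPdist_le aa0 e /aa0; apply: filterS => n hn x _; rewrite distrC.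
Qed.

Lemma unif_cvgD F G f g : unif_cvg F f -> unif_cvg G g ->
  unif_cvg (fun n x => F n x + G n x) (fun x => f x + g x).
Proof.
move=> Ff Gg e e0; have e2 : 0 < e / 2 by lra.
apply: filterS2 (Ff _ e2) (Gg _ e2) => n hF hG x Dx.
rewrite opprD addrACA; apply: le_trans (ler_normD _ _) _.
by have := hF x Dx; have := hG x Dx; lra.
Qed.

Lemma unif_cvgM F G f g (C K : R) : 0 <= C -> 0 <= K ->
  (forall n x, D x -> `|F n x| <= C) -> (forall x, D x -> `|g x| <= K) ->
  unif_cvg F f -> unif_cvg G g ->
  unif_cvg (fun n x => F n x * G n x) (fun x => f x * g x).
Proof.
move=> C0 K0 FC gK Ff Gg e e0.
pose del := e / (C + K + 1).
have del0 : 0 < del by rewrite divr_gt0 //; lra.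
have delCK : C * del + del * K <= e.
  have CK0 : C + K + 1 != 0 by rewrite gt_eqF //; lra.
  rewrite (mulrC C) -mulrDr -[leRHS](divfK CK0) ler_pM2l //; lra.
apply: filterS2 (Ff _ del0) (Gg _ del0) => n hF hG x Dx.
have -> : F n x * G n x - f x * g x = F n x * (G n x - g x) + (F n x - f x) * g x.
  by rewrite mulrBr mulrBl addrA subrK.
apply: le_trans (ler_normD _ _) _; rewrite !normrM.
apply: le_trans delCK; apply: lerD; apply: ler_pM => //.
- exact: FC.
- exact: hG.
- exact: hF.
- exact: gK.
Qed.

Lemma unif_cvg_sum m (F : I -> T -> 'I_m -> R) (g : T -> 'I_m -> R) :
  (forall j, unif_cvg (fun n x => F n x j) (g^~ j)) ->
  unif_cvg (fun n x => \sum_j F n x j) (fun x => \sum_j g x j).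
Proof.
move=> Fg e e0; pose del := e / (m%:R + 1).
have m0 : 0 <= m%:R :> R by [].
have del0 : 0 < del by rewrite divr_gt0 //; lra.
have : \forall n \near U, forall j x, D x -> `|F n x j - g x j| <= del.
  by apply: filter_forall => j; exact: Fg.
apply: filterS => n hn x Dx.
rewrite -sumrB; apply: le_trans (ler_norm_sum _ _ _) _.
apply: le_trans (_ : _ <= \sum_(j < m) del) _; first by apply: ler_sum => j _; exact: hn.
rewrite sumr_const card_ord -mulr_natr /del mulrAC ler_pdivrMr; last lra.
rewrite ler_pM2l //; lra.
Qed.

End UniformConvergence.

Section ProperUniformConvergence.
Variables (R : realType) (I T : Type) (U : set_system I) (D : set T).
Context {PU : ProperFilter U}.
Variable F : I -> T -> R.

Lemma unif_cvg_unique g h : unif_cvg U D F g -> unif_cvg U D F h ->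
  forall x, D x -> g x = h x.
Proof.
move=> Fg Fh x Dx; apply: (norm_cvg_unique (F := (fun n => F n x) @ U)).
- by apply/cvgrPdist_le => e /Fg; apply: filterS => n /(_ x Dx); rewrite distrC.
- by apply/cvgrPdist_le => e /Fh; apply: filterS => n /(_ x Dx); rewrite distrC.
Qed.

Lemma unif_cvg_unbounded g :
  unif_cvg U D F g -> (forall M, \forall n \near U, forall x, D x -> M <= `|F n x|) ->
  forall x, ~ D x.
Proof.
move=> Fg Fbig x Dx; have [n [/(_ x Dx) Fg1 /(_ x Dx) Fbig2]] :=
  filter_ex (filterI (Fg _ ltr01) (Fbig (`|g x| + 2))).
by have := lerB_dist (F n x) (g x); lra.
Qed.

End ProperUniformConvergence.

Section UltrafilterLimits.
Variables (R : realType) (I : Type) (U : set_system I).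
Context {UU : UltraFilter U}.

Lemma ultra_fmap (J : Type) (u : I -> J) : UltraFilter (u @ U).
Proof.
split; first exact: fmap_proper_filter.
move=> G PG sUG; rewrite predeqE => A; split; last exact: sUG.
move=> GA; have [//|UAC] := in_ultra_setVsetC (u @^-1` A) UU.
have : G (A `&` ~` A) by apply: filterI => //; exact: sUG.
by rewrite setICr => /filter_ex [].
Qed.

Lemma ultra_cvg_bounded (u : I -> R) M : (\forall n \near U, `|u n| <= M) ->
  exists2 a, `|a| <= M & u @ U --> a.
Proof.
move=> uM; have uMM : (u @ U) (`[- M, M] : set R).
  by apply: filterS uM => n; rewrite /= in_itv /= -ler_norml.
have := @segment_compact _ (- M) M; rewrite compact_ultra.
move=> /(_ _ (ultra_fmap u) uMM) [a [Ma ua]]; exists a => //.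
by move: Ma; rewrite /= in_itv /= -ler_norml.
Qed.

Lemma ultra_real_cvg (u : I -> R) :
  (exists a : R, u @ U --> a) \/ u @ U --> +oo \/ u @ U --> -oo.
Proof.
have [[M uM]|unbdd] := pselect (exists M : R, \forall n \near U, `|u n| <= M).
  by left; have [a _ ua] := ultra_cvg_bounded uM; exists a.
have big M : \forall n \near U, M < `|u n|.
  have [uM|] := in_ultra_setVsetC [set n | `|u n| <= M] UU.
    by exfalso; apply: unbdd; exists M.
  by apply: filterS => n /= /negP; rewrite -ltNge.
right; have [u0|u0] := in_ultra_setVsetC [set n | 0 <= u n] UU.
  left; apply/cvgryPge => M; apply: filterS2 u0 (big M) => n /= un0.
  by rewrite ger0_norm // => /ltW.
right; apply/cvgrNyPle => M; apply: filterS2 u0 (big (- M)) => n /= /negP.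
by rewrite -ltNge => un0; rewrite ltr0_norm //; lra.
Qed.

End UltrafilterLimits.

Lemma ger0_relu (R : realType) (a : R) : 0 <= a -> relu a = a.
Proof. by move=> a0; rewrite /relu max_r. Qed.

Lemma ler0_relu (R : realType) (a : R) : a <= 0 -> relu a = 0.
Proof. by move=> a0; rewrite /relu max_l. Qed.

Lemma relu_lipschitz (R : realType) (a b : R) : `|relu a - relu b| <= `|a - b|.
Proof.
have [a0|a0] := leP 0 a; have [b0|b0] := leP 0 b.
- by rewrite !ger0_relu.
- by rewrite (ger0_relu a0) (ler0_relu (ltW b0)) subr0 !ger0_norm //; lra.
- rewrite (ler0_relu (ltW a0)) (ger0_relu b0) sub0r normrN ger0_norm //.
  by rewrite ler0_norm; lra.
- by rewrite (ler0_relu (ltW a0)) (ler0_relu (ltW b0)) subrr normr0.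
Qed.

Lemma relu_norm_le (R : realType) (a : R) : `|relu a| <= `|a|.
Proof. by have := relu_lipschitz a 0; rewrite (ler0_relu (lexx 0)) !subr0. Qed.

Section ShiftedLimits.
Variables (R : realType) (I T : Type) (U : set_system I) (D : set T).
Context {UU : UltraFilter U}.
Variables (F : I -> T -> R) (g : T -> R) (b : I -> R) (K : R).
Hypotheses (Fg : unif_cvg U D F g) (gK : forall x, D x -> `|g x| <= K).

Lemma unif_cvg_relu_shift : exists c (s : I -> R),
  unif_cvg U D (fun n x => relu (F n x + b n) - s n) (fun x => relu (g x + c)).
Proof.
have [[c bc]|[/cvgryPge bp|/cvgrNyPle bn]] := ultra_real_cvg b.
- exists c, (fun=> 0) => e e0.
  apply: filterS (unif_cvgD Fg (unif_cvg_cst _ bc) e0) => n Fbe x Dx.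
  by rewrite subr0; apply: le_trans (relu_lipschitz _ _) (Fbe x Dx).
- exists (K + 1), (fun n => b n - (K + 1)) => e e0; near=> n.
  have Fe : forall x, D x -> `|F n x - g x| <= e by near: n; exact: Fg.
  have F1 : forall x, D x -> `|F n x - g x| <= 1 by near: n; exact: Fg.
  have bK : K + 2 <= b n by near: n; exact: bp.
  move=> x Dx; have /andP[gl gu] : - K <= g x <= K by rewrite -ler_norml; exact: gK.
  have /andP[F1l F1u] : - 1 <= F n x - g x <= 1 by rewrite -ler_norml; exact: F1.
  rewrite !ger0_relu; [|lra|lra].
  have -> : F n x + b n - (b n - (K + 1)) - (g x + (K + 1)) = F n x - g x by ring.
  exact: Fe.
- exists (- (K + 1)), (fun=> 0) => e e0; near=> n.
  have F1 : forall x, D x -> `|F n x - g x| <= 1 by near: n; exact: Fg.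
  have bK : b n <= - (K + 2) by near: n; exact: bn.
  move=> x Dx; have /andP[gl gu] : - K <= g x <= K by rewrite -ler_norml; exact: gK.
  have /andP[F1l F1u] : - 1 <= F n x - g x <= 1 by rewrite -ler_norml; exact: F1.
  by rewrite !ler0_relu; [rewrite !subrr normr0 ltW|lra|lra].
Unshelve. all: by end_near. Qed.

Lemma unif_cvg_shift_or_unbounded :
  (exists c, unif_cvg U D (fun n x => F n x + b n) (fun x => g x + c)) \/
  (forall M, \forall n \near U, forall x, D x -> M <= `|F n x + b n|).
Proof.
have [[c bc]|bpm] := ultra_real_cvg b.
  by left; exists c; exact: unif_cvgD Fg (unif_cvg_cst _ bc).
right => M; near=> n.
have F1 : forall x, D x -> `|F n x - g x| <= 1 by near: n; exact: Fg.
have bM : M + K + 1 <= `|b n|.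
  near: n; case: bpm => [/cvgryPge bp|/cvgrNyPle bn].
    by apply: filterS (bp (M + K + 1)) => n /le_trans; apply; exact: ler_norm.
  apply: filterS (bn (- (M + K + 1))) => n bnM.
  by rewrite -normrN; apply: le_trans (ler_norm _); rewrite lerNr.
move=> x Dx; have /andP[gl gu] : - K <= g x <= K by rewrite -ler_norml; exact: gK.
have /andP[F1l F1u] : - 1 <= F n x - g x <= 1 by rewrite -ler_norml; exact: F1.
have FK : `|F n x| <= K + 1 by rewrite ler_norml; apply/andP; split; lra.
have := lerB_dist (b n) (- F n x); rewrite opprK normrN [F n x + _]addrC; lra.
Unshelve. all: by end_near. Qed.

End ShiftedLimits.

Lemma measurable_borelRV_continuous (R : realType) n (g : 'rV[R]_n -> R) :
  continuous g -> measurable_fun [set: borelRV R n] g.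
Proof.
move=> cg; apply: (measurability _ (RGenOpens.measurableE R)) => _ [_ [a [b ->] <-]].
apply: sub_sigma_algebra; rewrite setTI.
by apply: (proj1 (continuousP _) cg); exact: interval_open.
Qed.

Section Layers.
Variables (R : realType) (d : nat) (Ns : seq nat).
Local Notation W := (width d Ns).
Local Notation L := (size Ns).
Implicit Types (Phi Psi : network R) (x : 'rV[R]_d).

Definition act Phi x l j : R :=
  if insub j is Some k then @hidden R d Ns Phi x l k else 0.

Definition layer_sum Phi x l i : R := \sum_(j < W l) wA Phi l.+1 i j * act Phi x l j.

Lemma act_ord Phi x l (k : 'I_(W l)) : act Phi x l k = @hidden R d Ns Phi x l k.
Proof. by rewrite /act valK. Qed.

Lemma act_out Phi x l j : (W l <= j)%N -> act Phi x l j = 0.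
Proof. by move=> lj; rewrite /act insubF // ltnNge lj. Qed.

Lemma act0 Phi Psi x j : act Phi x 0 j = act Psi x 0 j.
Proof. by rewrite /act; case: insub. Qed.

Lemma actS Phi x l i : (i < W l.+1)%N ->
  act Phi x l.+1 i = relu (layer_sum Phi x l i + wb Phi l.+1 i).
Proof.
move=> li; rewrite [LHS]/act insubT /=; congr (relu (_ + _)).
by apply: eq_bigr => j _; rewrite act_ord.
Qed.

Lemma realizeE Phi x (i : 'I_(outdim d Ns)) : (0 < L)%N ->
  realize Ns Phi x ord0 i = layer_sum Phi x L.-1 i + wb Phi L i.
Proof.
move=> L0; rewrite mxE /layer_sum prednK //; congr (_ + _).
by apply: eq_bigr => j _; rewrite act_ord.
Qed.

Lemma act_bias_local Phi Psi l : wA Phi = wA Psi ->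
  (forall l' i, (0 < l' <= l)%N -> wb Phi l' i = wb Psi l' i) ->
  forall x j, act Phi x l j = act Psi x l j.
Proof.
move=> eA; elim: l => [|l IH] eb x j; first exact: act0.
have [lj|lj] := ltnP j (W l.+1); last by rewrite !act_out.
rewrite !actS // /layer_sum eA eb ?leqnn //; congr (relu (_ + _)).
apply: eq_bigr => k _; rewrite IH // => l' i /andP[l'0 l'l].
by apply: eb; rewrite l'0 (leq_trans l'l).
Qed.

Section Bounds.
Variables (Omega : set 'rV[R]_d) (B : R).
Hypotheses (B0 : 0 <= B) (OmegaB : forall x, Omega x -> forall j, `|x ord0 j| <= B).

Lemma act_bounded Phi l : exists2 K, 0 <= K &
  forall x, Omega x -> forall j, `|act Phi x l j| <= K.
Proof.
elim: l => [|l [K K0 actK]].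
  exists B => // x Ox j; rewrite /act; case: insub => [k|] /=; first exact: OmegaB.
  by rewrite normr0.
pose Ki i := \sum_(j < W l) `|wA Phi l.+1 i j| * K + `|wb Phi l.+1 i|.
have Ki0 i : 0 <= Ki i by rewrite addr_ge0 // sumr_ge0 // => j _; rewrite mulr_ge0.
exists (\sum_(i < W l.+1) Ki i) => [|x Ox j]; first exact: sumr_ge0.
have [lj|lj] := ltnP j (W l.+1); last by rewrite act_out ?normr0 ?sumr_ge0.
rewrite actS //; apply: le_trans (relu_norm_le _) _.
apply: le_trans (_ : _ <= Ki j) _; last by rewrite (bigD1 (Ordinal lj)) //= lerDl sumr_ge0.
apply: le_trans (ler_normD _ _) _; rewrite lerD // /layer_sum.
apply: le_trans (ler_norm_sum _ _ _) _; apply: ler_sum => k _.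
by rewrite normrM ler_wpM2l // actK.
Qed.

Lemma layer_sum_bounded Phi l i : exists2 K, 0 <= K &
  forall x, Omega x -> `|layer_sum Phi x l i| <= K.
Proof.
have [K K0 actK] := act_bounded Phi l.
exists (\sum_(j < W l) `|wA Phi l.+1 i j| * K) => [|x Ox].
  by rewrite sumr_ge0 // => j _; rewrite mulr_ge0.
apply: le_trans (ler_norm_sum _ _ _) _; apply: ler_sum => j _.
by rewrite normrM ler_wpM2l // actK.
Qed.

End Bounds.

Lemma measurable_act Phi l j :
  measurable_fun [set: borelRV R d] (fun x => act Phi x l j).
Proof.
elim: l j => [|l IH] j.
  rewrite /act; case: insub => [k|] /=; last exact: measurable_cst.
  by apply: measurable_borelRV_continuous; exact: (@coord_continuous R 1 d ord0 k).
have [lj|lj] := ltnP j (W l.+1); last first.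
  rewrite (_ : (fun x => _) = cst 0); first exact: measurable_cst.
  by apply/funext => x; rewrite act_out.
rewrite (_ : (fun x => _) = (fun x => Num.max 0 (layer_sum Phi x l j + wb Phi l.+1 j))).
  apply: (@measurable_maxr _ _ R setT (cst 0)); first exact: measurable_cst.
  apply: measurable_funD; last exact: measurable_cst.
  by apply: measurable_sum => k; apply: measurable_funM; [exact: measurable_cst|exact: IH].
by apply/funext => x; rewrite actS.
Qed.

Lemma measurable_realize Phi (i : 'I_(outdim d Ns)) : (0 < L)%N ->
  measurable_fun [set: borelRV R d] (fun x => realize Ns Phi x ord0 i).
Proof.
move=> L0; rewrite (_ : (fun x => _) = (fun x => layer_sum Phi x L.-1 i + wb Phi L i)).
  apply: measurable_funD; last exact: measurable_cst.
  apply: measurable_sum => k; apply: measurable_funM; first exact: measurable_cst.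
  exact: measurable_act.
by apply/funext => x; rewrite realizeE.
Qed.

End Layers.

Definition weight_idx d Ns l i j :=
  [&& l < size Ns, i < width d Ns l.+1 & j < width d Ns l]%N.

Lemma weight_le_scaling_norm (R : realType) d Ns (Phi : network R) l i j :
  weight_idx d Ns l i j -> `|wA Phi l.+1 i j| <= scaling_norm d Ns Phi.
Proof.
case/and3P => lL li lj; pose l' : 'I_(size Ns) := Ordinal lL.
apply: le_trans (le_bigmax _ _ l').
apply: le_trans (le_bigmax _ _ (Ordinal li : 'I_(width d Ns l'.+1))).
exact: (le_bigmax _ _ (Ordinal lj : 'I_(width d Ns l'))).
Qed.

Lemma scaling_norm_le (R : realType) d Ns (Phi : network R) C : 0 <= C ->
  (forall l i j, weight_idx d Ns l i j -> `|wA Phi l.+1 i j| <= C) ->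
  scaling_norm d Ns Phi <= C.
Proof.
move=> C0 PhiC; apply: bigmax_le => // l _; apply: bigmax_le => // i _.
by apply: bigmax_le => // j _; apply: PhiC; rewrite /weight_idx !ltn_ord.
Qed.

Section LimitNetwork.
Variables (R : realType) (d : nat) (Ns : seq nat).
Local Notation W := (width d Ns).
Local Notation L := (size Ns).
Variables (Omega : set 'rV[R]_d) (B : R).
Hypotheses (B0 : 0 <= B) (OmegaB : forall x, Omega x -> forall j, `|x ord0 j| <= B).
Variables (I : Type) (U : set_system I).
Context {UU : UltraFilter U}.
Variables (C : R) (Phis : I -> network R) (Alim : nat -> nat -> nat -> R).
Hypotheses (C0 : 0 <= C)
  (PhisC : forall n l i j, weight_idx d Ns l i j -> `|wA (Phis n) l.+1 i j| <= C)
  (PhisA : forall l i j, weight_idx d Ns l i j ->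
     (fun n => wA (Phis n) l.+1 i j) @ U --> Alim l.+1 i j).
Local Notation act := (act Ns).
Local Notation layer_sum := (layer_sum Ns).

Definition tracks l (b : nat -> nat -> R) (s : I -> nat -> R) :=
  forall j, (j < W l)%N -> unif_cvg U Omega
    (fun n x => act (Phis n) x l j - s n j) (fun x => act (Network Alim b) x l j).

Lemma tracks0 b : tracks 0 b (fun _ _ => 0).
Proof.
move=> j _ e e0; apply: nearW => n x _.
by rewrite subr0 (act0 _ _ (Network Alim b)) subrr normr0 ltW.
Qed.

Lemma layer_sum_unif_cvg l b s i : (l < L)%N -> (i < W l.+1)%N -> tracks l b s ->
  unif_cvg U Omega
    (fun n x => layer_sum (Phis n) x l i - \sum_(j < W l) wA (Phis n) l.+1 i j * s n j)
    (fun x => layer_sum (Network Alim b) x l i).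
Proof.
move=> lL li tr; have [K K0 actK] := act_bounded Ns B0 OmegaB (Network Alim b) l.
have idx (j : 'I_(W l)) : weight_idx d Ns l i j by rewrite /weight_idx lL li /=.
have termwise (j : 'I_(W l)) : unif_cvg U Omega
    (fun n x => wA (Phis n) l.+1 i j * (act (Phis n) x l j - s n j))
    (fun x => Alim l.+1 i j * act (Network Alim b) x l j).
  apply: (unif_cvgM C0 K0).
  - by move=> n x _; exact: PhisC.
  - by move=> x Ox; exact: actK.
  - by apply: unif_cvg_cst; exact: PhisA.
  - exact: tr.
apply: eq_unif_cvg (unif_cvg_sum termwise) _ _ => // n x.
by rewrite /layer_sum -sumrB; apply: eq_bigr => j _; rewrite mulrBr.
Qed.

Lemma tracks_succ l b s : (l < L)%N -> tracks l b s -> exists b' s', tracks l.+1 b' s'.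
Proof.
move=> lL tr.
have step i : exists cs : R * (I -> R), (i < W l.+1)%N ->
    unif_cvg U Omega (fun n x => act (Phis n) x l.+1 i - cs.2 n)
      (fun x => relu (layer_sum (Network Alim b) x l i + cs.1)).
  have [li|] := ltnP i (W l.+1); last by exists (0, fun=> 0).
  have [K _ sumK] := layer_sum_bounded Ns B0 OmegaB (Network Alim b) l i.
  pose sigma n := \sum_(j < W l) wA (Phis n) l.+1 i j * s n j.
  have [c [s' hcs]] := unif_cvg_relu_shift (fun n => sigma n + wb (Phis n) l.+1 i)
    (layer_sum_unif_cvg lL li tr) sumK.
  exists (c, s') => _; apply: eq_unif_cvg hcs _ _ => // n x.
  by rewrite actS // addrA subrK.
have [cs hcs] := choice step.
exists (fun l' i => if l' == l.+1 then (cs i).1 else b l' i), (fun n i => (cs i).2 n).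
move=> j lj; apply: eq_unif_cvg (hcs j lj) _ _ => // x.
rewrite actS //= eqxx /layer_sum; congr (relu (_ + _)); apply: eq_bigr => k _.
by congr (_ * _); apply: act_bias_local => // l' i /andP[_ l'l]; rewrite /= ltn_eqF.
Qed.

Lemma tracks_exists l : (l < L)%N -> exists b s, tracks l b s.
Proof.
elim: l => [_|l IH lL]; first by exists (fun _ _ => 0), (fun _ _ => 0); exact: tracks0.
by have [b [s tr]] := IH (ltnW lL); exact: tracks_succ (ltnW lL) tr.
Qed.

Lemma realize_coord_limit_or_unbounded b s (i : 'I_(outdim d Ns)) : (0 < L)%N ->
  tracks L.-1 b s ->
  (exists c, unif_cvg U Omega (fun n x => realize Ns (Phis n) x ord0 i)
     (fun x => layer_sum (Network Alim b) x L.-1 i + c)) \/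
  (forall M, \forall n \near U, forall x, Omega x -> M <= `|realize Ns (Phis n) x ord0 i|).
Proof.
move=> L0 tr; have L1L : (L.-1 < L)%N by rewrite prednK.
have li : (i < W L.-1.+1)%N by rewrite prednK.
have [K _ sumK] := layer_sum_bounded Ns B0 OmegaB (Network Alim b) L.-1 i.
pose sigma n := \sum_(j < W L.-1) wA (Phis n) L.-1.+1 i j * s n j.
have [[c h]|h] := unif_cvg_shift_or_unbounded (fun n => sigma n + wb (Phis n) L i)
  (layer_sum_unif_cvg L1L li tr) sumK.
  by left; exists c; apply: eq_unif_cvg h _ _ => // n x; rewrite realizeE // addrA subrK.
right => M; apply: filterS (h M) => n hn x Ox.
by rewrite realizeE // -(subrK (sigma n) (layer_sum _ _ _ _)) -addrA; exact: hn.
Qed.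

Lemma realize_limit_or_unbounded : (0 < L)%N -> exists b,
  (forall i : 'I_(outdim d Ns), unif_cvg U Omega
     (fun n x => realize Ns (Phis n) x ord0 i) (fun x => realize Ns (Network Alim b) x ord0 i))
  \/ (exists i : 'I_(outdim d Ns), forall M, \forall n \near U, forall x, Omega x ->
     M <= `|realize Ns (Phis n) x ord0 i|).
Proof.
move=> L0; have L1L : (L.-1 < L)%N by rewrite prednK.
have [b [s tr]] := tracks_exists L1L.
have [[i unbdd]|bdd] := pselect (exists i : 'I_(outdim d Ns), forall M,
    \forall n \near U, forall x, Omega x -> M <= `|realize Ns (Phis n) x ord0 i|).
  by exists b; right; exists i.
have /choice [c hc] i : exists c, unif_cvg U Omega (fun n x => realize Ns (Phis n) x ord0 i)
    (fun x => layer_sum (Network Alim b) x L.-1 i + c).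
  have [//|unbdd] := realize_coord_limit_or_unbounded i L0 tr.
  by exfalso; apply: bdd; exists i.
pose b' l i := if l == L then oapp c 0 (insub i) else b l i.
exists b'; left => i; apply: eq_unif_cvg (hc i) _ _ => // x.
rewrite realizeE //= /b' eqxx valK /layer_sum; congr (_ + _); apply: eq_bigr => j _.
congr (_ * _); apply: act_bias_local => // l' k /andP[_ l'L].
by rewrite /= ltn_eqF // (leq_ltn_trans l'L L1L).
Qed.

End LimitNetwork.

Lemma bounded_coord (R : realType) n (A : set 'rV[R]_n) : bounded_set A ->
  exists2 B, 0 <= B & forall x, A x -> forall j, `|x ord0 j| <= B.
Proof.
move=> [M [Mreal AM]]; exists (`|M| + 1) => [|x Ax j]; first by rewrite addr_ge0.
apply: le_trans (_ : `|x| <= _).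
  by rewrite (_ : `|x| = mx_norm x) // mx_normrE; exact: (le_bigmax _ _ (ord0, j)).
by apply: AM => //; have := real_ler_norm Mreal; lra.
Qed.

Lemma ultra_network_limit (R : realType) d Ns (Omega : set 'rV[R]_d) (I : Type)
    (U : set_system I) {UU : UltraFilter U} (C : R) (Phis : I -> network R) :
  (0 < size Ns)%N -> 0 <= C -> bounded_set Omega ->
  (forall n, scaling_norm d Ns (Phis n) <= C) ->
  exists Phi : network R, scaling_norm d Ns Phi <= C /\
  ((forall i : 'I_(outdim d Ns), unif_cvg U Omega
      (fun n x => realize Ns (Phis n) x ord0 i) (fun x => realize Ns Phi x ord0 i))
   \/ (exists i : 'I_(outdim d Ns), forall M, \forall n \near U, forall x, Omega x ->
      M <= `|realize Ns (Phis n) x ord0 i|)).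
Proof.
move=> L0 C0 Obdd PhisC; have [B B0 OmegaB] := bounded_coord Obdd.
have PhisC' n l i j : weight_idx d Ns l i j -> `|wA (Phis n) l.+1 i j| <= C.
  by move=> idx; exact: le_trans (weight_le_scaling_norm _ idx) (PhisC n).
have /choice [a ha] (t : nat * nat * nat) : exists a : R, weight_idx d Ns t.1.1 t.1.2 t.2 ->
    `|a| <= C /\ (fun n => wA (Phis n) t.1.1.+1 t.1.2 t.2) @ U --> a.
  case: t => [[l i] j] /=; have [idx|] := boolP (weight_idx d Ns l i j); last by exists 0.
  have uC : \forall n \near U, `|wA (Phis n) l.+1 i j| <= C.
    by apply: nearW => n; exact: PhisC'.
  by have [a aC wa] := ultra_cvg_bounded uC; exists a.
pose Alim l i j := a (l.-1, i, j).
have [b lim] := realize_limit_or_unbounded (Alim := Alim) B0 OmegaB C0 PhisC'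
  (fun l i j idx => (ha (l, i, j) idx).2) L0.
exists (Network Alim b); split => //.
by apply: scaling_norm_le C0 _ => l i j idx; exact: (ha (l, i, j) idx).1.
Qed.

Section LnormLowerBound.
Variables (R : realType) (dT : measure_display) (T : measurableType dT).
Variable mu : {finite_measure set T -> \bar R}.
Variables (A : set T) (c : R).
Hypotheses (mA : measurable A) (muA : (0 < mu A)%E) (c0 : 0 < c).

Lemma Lnormy_lbound (G : T -> R) : (forall x, A x -> c <= G x) ->
  (c%:E <= Lnorm mu +oo (fun x => (G x)%:E))%E.
Proof.
move=> AG; have muT : (0 < mu setT)%E by apply: lt_le_trans muA (le_measure _ _ _ _); rewrite ?inE.
rewrite unlock /Lnorm muT leNgt; apply/negP => Gc.
have [N [mN N0 sub]] := ess_sup_ge mu (abse \o (fun x => (G x)%:E)).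
suff : (mu A <= mu N)%E by rewrite N0 leNgt muA.
apply: le_measure; rewrite ?inE // => x Ax; apply: sub => /= Gx.
have := le_lt_trans Gx Gc; rewrite /= lte_fin.
by have := AG x Ax; have := ler_norm (G x); lra.
Qed.

Lemma Lnorm_fin_lbound (r : R) (G : T -> R) : 1 <= r -> (forall x, A x -> c <= G x) ->
  ((c * fine (mu A) `^ r^-1)%:E <= Lnorm mu r%:E (fun x => (G x)%:E))%E.
Proof.
move=> r1 AG; have r0 : 0 < r by lra.
have m0 : 0 < fine (mu A) by rewrite fine_gt0 // muA ltey_eq fin_num_measure.
have cr0 : 0 <= c `^ r by exact: powR_ge0.
have AGr : ((c `^ r * fine (mu A))%:E <= \int[mu]_x (`|(G x)%:E| `^ r))%E.
  rewrite ge0_integralTE; last by move=> x; exact: poweR_ge0.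
  apply: ereal_sup_ubound; exists (scale_nnsfun (indic_nnsfun R mA) cr0) => [x /=|].
    rewrite mindicE; case: (boolP (x \in A)) => [/[!inE] Ax|_]; last first.
      by rewrite mulr0 lee_fin powR_ge0.
    rewrite mulr1 lee_fin; apply: ge0_ler_powR; rewrite ?nnegrE ?normr_ge0 //.
    - exact: ltW.
    - exact: ltW.
    - by have := AG x Ax; have := ler_norm (G x); lra.
  rewrite /scale_nnsfun /mul_nnsfun /= sintegralrM sintegral_indic //.
  by rewrite EFinM fineK ?fin_num_measure.
have -> : (c * fine (mu A) `^ r^-1)%:E = ((c `^ r * fine (mu A))%:E `^ r^-1)%E.
  rewrite poweR_EFin powRM ?powR_ge0 ?(ltW m0) // -powRrM mulfV ?gt_eqF //.
  by rewrite powRr1 // ltW.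
rewrite unlock /Lnorm gt0_ler_poweR //.
- by rewrite invr_ge0 ltW.
- by rewrite in_itv /= leey andbT lee_fin mulr_ge0 // ltW.
- by rewrite in_itv /= leey andbT integral_ge0 // => x _; rewrite poweR_ge0.
Qed.

Lemma Lnorm_lbound (p : \bar R) : (1 <= p)%E -> exists2 del : R, 0 < del &
  forall G : T -> R, (forall x, A x -> c <= G x) ->
    (del%:E <= Lnorm mu p (fun x => (G x)%:E))%E.
Proof.
case: p => [r| |] //; last by exists c => // G; exact: Lnormy_lbound.
rewrite lee_fin => r1; exists (c * fine (mu A) `^ r^-1) => [|G]; last exact: Lnorm_fin_lbound.
by rewrite mulr_gt0 // powR_gt0 // fine_gt0 // muA ltey_eq fin_num_measure.
Qed.

End LnormLowerBound.

Lemma coord_le_eucl (R : realType) n (v : 'rV[R]_n) i : `|v ord0 i| <= eucl v.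
Proof.
rewrite /eucl -sqrtr_sqr ler_sqrt; last by rewrite sumr_ge0 // => j _; exact: sqr_ge0.
by rewrite (bigD1 i) //= lerDl sumr_ge0 // => j _; exact: sqr_ge0.
Qed.

Lemma unif_cvg_coord (R : realType) (I T : Type) (U : set_system I) {FU : Filter U}
    (D : set T) n (F : I -> T -> 'rV[R]_n) (f : T -> 'rV[R]_n) :
  (forall e, 0 < e -> \forall k \near U, forall x, D x -> eucl (F k x - f x) <= e) ->
  forall i, unif_cvg U D (fun k x => F k x ord0 i) (fun x => f x ord0 i).
Proof.
move=> Ff i e /Ff; apply: filterS => k Fk x Dx.
by apply: le_trans (Fk x Dx); have := coord_le_eucl (F k x - f x) i; rewrite !mxE.
Qed.

Section LpLimits.
Variables (R : realType) (dT : measure_display) (T : measurableType dT).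
Variables (mu : {finite_measure set T -> \bar R}) (p : \bar R) (D : set T).
Hypotheses (p1 : (1 <= p)%E) (mD : measurable D) (muDC : mu (~` D) = 0%E).

Lemma ae_of_null_cover (A : nat -> set T) (P : T -> Prop) :
  (forall k, measurable (A k)) -> (forall k, mu (A k) = 0%E) ->
  (forall x, D x -> ~ P x -> exists k, A k x) -> {ae mu, forall x, P x}.
Proof.
move=> mA A0 cover; apply: (@negligibleS _ _ _ _ (~` D `|` \bigcup_k A k)).
  move=> x /= nPx; have [Dx|] := pselect (D x); last by left.
  by have [k Akx] := cover x Dx nPx; right; exists k.
apply: negligibleU; first by apply/negligibleP => //; exact: measurableC.
by apply: negligible_bigcup => k; exact: ((negligibleP mu (mA k)).2 (A0 k)).
Qed.

Variables (I : Type) (U : set_system I).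
Context {PU : ProperFilter U}.
Variables (m : nat) (F : I -> T -> 'rV[R]_m) (f : T -> 'rV[R]_m).
Hypotheses (Ff : (fun n => Lnorm mu p (fun x => (eucl (F n x - f x))%:E)) @ U --> 0%E)
  (mf : forall i, measurable_fun D (fun x => f x ord0 i)).

Lemma Lnorm_cvg0_null A c : measurable A -> 0 < c ->
  (\forall n \near U, forall x, A x -> c <= eucl (F n x - f x)) -> mu A = 0%E.
Proof.
move=> mA c0 AF; apply/eqP; rewrite eq_le measure_ge0 andbT leNgt; apply/negP => muA.
have [del del0 delF] := Lnorm_lbound mA muA c0 p1.
have /Ff small : nbhs (0%E : \bar R) [set y | (y < del%:E)%E].
  apply/nbhs_EFin; exists del => //= y; rewrite /ball /= sub0r normrN lte_fin.
  exact: le_lt_trans (ler_norm y).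
have [n [/delF]] := filter_ex (filterI AF small).
by rewrite /= leNgt => /negP.
Qed.

Lemma Lp_unif_limit_ae (g : T -> 'rV[R]_m) :
  (forall i, measurable_fun D (fun x => g x ord0 i)) ->
  (forall i, unif_cvg U D (fun n x => F n x ord0 i) (fun x => g x ord0 i)) ->
  {ae mu, forall x, g x = f x}.
Proof.
move=> mg Fg.
have coord i : {ae mu, forall x, g x ord0 i = f x ord0 i}.
  pose h x : R := `|g x ord0 i - f x ord0 i|.
  have mh : measurable_fun D h by apply: measurableT_comp => //; exact: measurable_funB.
  have null c : 0 < c -> mu (D `&` h @^-1` `[c, +oo[) = 0%E.
    move=> c0; have c20 : 0 < c / 2 by lra.
    apply: (Lnorm_cvg0_null _ c20); first exact: (mh mD _ (measurable_itv _)).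
    apply: filterS (Fg i _ c20) => n Fn x [Dx]; rewrite /= in_itv /= andbT => hx.
    have := Fn x Dx; have := coord_le_eucl (F n x - f x) i; rewrite !mxE.
    have : h x <= `|F n x ord0 i - g x ord0 i| + `|F n x ord0 i - f x ord0 i|.
      by rewrite (distrC (F n x ord0 i)); exact: ler_distD.
    lra.
  apply: (ae_of_null_cover (A := fun k => D `&` h @^-1` `[k.+1%:R^-1, +oo[)) => [k|k|x Dx gf].
  - exact: (mh mD _ (measurable_itv _)).
  - exact: null.
  - have [|k hk] := @ltr_add_invr R 0 (h x); first by rewrite normr_gt0 subr_eq0; apply/eqP.
    by exists k; split; rewrite //= in_itv /= andbT ltW // -(add0r k.+1%:R^-1).
have := @filter_forall _ _ _ _ (ae_filter_ringOfSetsType mu) coord.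
by apply: negligibleS => x /= gf fg; apply: gf; apply/rowP => i; exact: fg.
Qed.

Lemma Lp_unbounded_ae i :
  (forall M, \forall n \near U, forall x, D x -> M <= `|F n x ord0 i|) ->
  forall P : T -> Prop, {ae mu, forall x, P x}.
Proof.
move=> Fbig P.
apply: (ae_of_null_cover (A := fun k : nat =>
  D `&` (fun x => f x ord0 i) @^-1` `[- k%:R, k%:R])) => [k|k|x Dx _].
- by apply: (mf i mD); exact: measurable_itv.
- apply: (Lnorm_cvg0_null _ ltr01); first by apply: (mf i mD); exact: measurable_itv.
  apply: filterS (Fbig (k%:R + 1)) => n Fn x [Dx]; rewrite /= in_itv /= -ler_norml => fk.
  have := Fn x Dx; have := coord_le_eucl (F n x - f x) i; rewrite !mxE.
  by have := lerB_dist (F n x ord0 i) (f x ord0 i); lra.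
- exists (Num.Def.archi_bound `|f x ord0 i|); split => //.
  by rewrite /= in_itv /= -ler_norml ltW // archi_boundP.
Qed.

End LpLimits.

Unset Implicit Arguments.

Theorem proposition3p7 (R : realType) (d : nat) (Ns : seq nat) (C : R)
  (Omega : set 'rV[R]_d) :
  (0 < size Ns)%N -> 0 < C ->
  measurable (Omega : set (borelRV R d)) ->
  bounded_set Omega ->
  (* closedness in L^p(mu; R^{N_L}) for all p in [1, oo] and finite Borel mu on Omega *)
  (forall (p : \bar R) (mu : {finite_measure set (borelRV R d) -> \bar R}),
     (1 <= p)%E ->
     mu (~` (Omega : set (borelRV R d))) = 0%E ->
     forall (f : borelRV R d -> borelRV R (outdim d Ns)) (Phis : nat -> network R),
       measurable_fun (Omega : set (borelRV R d)) f ->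
       (forall n, scaling_norm d Ns (Phis n) <= C) ->
       (fun n => Lnorm mu p (fun x => (eucl (realize Ns (Phis n) x - f x))%:E))
         @ \oo --> 0%E ->
       exists Phi : network R, scaling_norm d Ns Phi <= C /\
         {ae mu, forall x, realize Ns Phi x = f x})
  /\
  (* closedness in C(Omega; R^{N_L}) with the sup norm, when Omega is compact *)
  (compact Omega ->
   forall (f : 'rV[R]_d -> 'rV[R]_(outdim d Ns)) (Phis : nat -> network R),
     {within Omega, continuous f} ->
     (forall n, scaling_norm d Ns (Phis n) <= C) ->
     (forall eps : R, 0 < eps -> \forall n \near \oo,
        forall x, Omega x -> eucl (realize Ns (Phis n) x - f x) <= eps) ->
     exists Phi : network R, scaling_norm d Ns Phi <= C /\
       (forall x, Omega x -> realize Ns Phi x = f x)).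
Proof.
move=> L0 C0 mO Obdd; have [U [UU oU]] := ultraFilterLemma (@eventually_filter).
split => [p mu p1 muO f Phis mf PhisC Ff|_ f Phis _ PhisC Ff].
- have [Phi [PhiC lim]] := ultra_network_limit L0 (ltW C0) Obdd PhisC.
  exists Phi; split => //.
  have FfU : (fun n => Lnorm mu p (fun x => (eucl (realize Ns (Phis n) x - f x))%:E))
    @ U --> 0%E by apply: (cvg_trans _ Ff); exact: cvg_app.
  have mfi i : measurable_fun (Omega : set (borelRV R d)) (fun x => f x ord0 i).
    exact: (measurableT_comp (measurable_borelRV_continuous
      (@coord_continuous R 1 (outdim d Ns) ord0 i)) mf).
  case: lim => [lim|[i unbdd]].
    apply: (Lp_unif_limit_ae p1 mO muO FfU mfi _ lim) => i.
    exact: measurable_funS (measurable_realize Phi i L0).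
  exact: (Lp_unbounded_ae p1 mO muO FfU mfi unbdd (fun x => realize Ns Phi x = f x)).
- have [Phi [PhiC lim]] := ultra_network_limit L0 (ltW C0) Obdd PhisC.
  exists Phi; split => // x Ox.
  have FfU (e : R) : 0 < e -> \forall n \near U, forall x, Omega x ->
      eucl (realize Ns (Phis n) x - f x) <= e by move=> /Ff; exact: oU.
  case: lim => [lim|[i unbdd]].
    by apply/rowP => i; exact: (unif_cvg_unique (lim i) (unif_cvg_coord FfU i) Ox).
  by case: (unif_cvg_unbounded (unif_cvg_coord FfU i) unbdd Ox).
Qed.
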